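(* Let $g,f\in\mathbb{Z}[[x]]$ with $g(0)=1$, $f(0)=0$ and $f'(0)\in\{1,-1\}$, and suppose the Riordan array $(g,f)$ is an involution, i.e. $g(x)g(f(x))=1$ and $f(f(x))=x$. Let $a(x)=\frac{x\,g(x)}{f(x)}$ (a formal power series with invertible constant term). Then the almost Riordan array $(a;g,f)$ is an involution in the group of almost Riordan arrays of first order.
   Context: All matrices are infinite lower-triangular with rows and columns indexed by $n,k\ge0$. $[x^n]h(x)$ denotes the coefficient of $x^n$ in $h$. The Riordan array $(g,f)$ is the matrix with entries $[x^n]g(x)f(x)^k$; it is an involution if $(g,f)^2=(1,x)$, equivalently $g(x)g(f(x))=1$ and $f(f(x))=x$. An almost Riordan array of first order $(a;g,f)$ has associated matrix $M$ with $M_{0,0}=a_0$, $M_{0,k}=0$ for $k\ge1$, $M_{n,0}=a_n$ for $n\ge1$, and $M_{n,k}=[x^{n-1}]\,g(x)f(x)^{k-1}$ for $n,k\ge1$; the product $(a;g,f)\cdot(b;u,v)=\big(b_0a+xg(x)\tilde b(f(x));\ g\,u(f),\ v(f)\big)$, $\tilde b(x)=(b(x)-b_0)/x$, corresponds to the matrix product. It is an involution if $M^2=I$. *)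

From HB Require Import structures.
From mathcomp Require Import all_boot all_order all_algebra.
Set Implicit Arguments. Unset Strict Implicit. Unset Printing Implicit Defensive.
Import Order.TTheory GRing.Theory Num.Theory.
Local Open Scope ring_scope.

(* A formal power series h in Z[[x]]; h n = [x^n] h. *)
Definition fps := nat -> int.

Definition fone : fps := fun n => (n == 0%N)%:Z.
Definition fX : fps := fun n => (n == 1%N)%:Z.

Definition fmul (p q : fps) : fps :=
  fun n => \sum_(i < n.+1) p i * q (n - i)%N.

Fixpoint fpow (p : fps) (k : nat) : fps :=
  if k is k'.+1 then fmul p (fpow p k') else fone.

(* Composition g(f(x)), meaningful when f 0 = 0 (then f^k has order >= k,
   so only k <= n contribute to [x^n]). *)
Definition fcomp (g f : fps) : fps :=
  fun n => \sum_(k < n.+1) g k * fpow f k n.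

Definition imat := nat -> nat -> int.

(* Product of lower-triangular matrices: (A B)_{n,k} = sum_{j <= n} A_{n,j} B_{j,k}
   (the terms j > n vanish since A is lower triangular). *)
Definition imatmul (A B : imat) : imat :=
  fun n k => \sum_(j < n.+1) A n j * B j k.

Definition imat1 : imat := fun n k => (n == k)%:Z.

Definition almost_riordan (a g f : fps) : imat :=
  fun n k =>
    if k == 0%N then a n
    else if n == 0%N then 0
    else fmul g (fpow f k.-1) n.-1.

Definition imat_involution (M : imat) : Prop :=
  forall n k, imatmul M M n k = imat1 n k.

From Pilot Require Import Defs.
From mathcomp Require Import all_boot all_order all_algebra.
From mathcomp Require Import ring zify.
Import GRing.Theory.
Local Open Scope ring_scope.
Set Implicit Arguments.
Unset Strict Implicit.

(* The almost Riordan array M = (a; g, f) acts on a column vector b by the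
   product rule  M b = b_0 a(x) + x g(x) b~(f(x)),  b~ = (b - b_0)/x.  Hence
   - column k+1 of M^2 is  x g(x) (g f^k)(f(x)) = x [g g(f)] f(f)^k = x^(k+1),
     using g g(f) = 1 and f(f) = x;
   - column 0 of M^2 is  a_0 a + x g a~(f), which equals a a(f) since
     a(f) = a_0 + f a~(f) and a f = x g; finally  x a a(f) = a a(f) f(f)
     = a (a f)(f) = a f g(f) = x g g(f) = x, so a a(f) = 1.
   Every coefficient involved only depends on finitely many coefficients of
   a, g, f, so the argument is carried out on polynomial truncations:
   1. congruence of polynomials modulo x^N (over any commutative ring), its
      compatibility with +, *, powers and composition, and the product rule
      for Riordan arrays (riordan_mulE);
   2. the two column identities above, modulo x^N;
   3. the dictionary between the series operations of Defs and polynomial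
      operations on truncations, and the product rule for (a; g, f);
   4. the theorem, by truncating at order n+2 for the entry (n, k). *)

Section CongruenceModXn.
Variable R : comNzRingType.
Implicit Types (P Q G F : {poly R}) (N : nat).

Definition eqmod N P Q := forall m, (m < N)%N -> P`_m = Q`_m.

Lemma eqmod_sym N P Q : eqmod N P Q -> eqmod N Q P.
Proof. by move=> PQ m ltmN; rewrite PQ. Qed.

Lemma eqmod_trans N P Q S : eqmod N P Q -> eqmod N Q S -> eqmod N P S.
Proof. by move=> PQ QS m ltmN; rewrite PQ ?QS. Qed.

Lemma eqmod_le M N P Q : (M <= N)%N -> eqmod N P Q -> eqmod M P Q.
Proof. by move=> leMN PQ m ltmM; rewrite PQ // (leq_trans ltmM leMN). Qed.

Lemma eqmod_add N P P' Q Q' :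
  eqmod N P P' -> eqmod N Q Q' -> eqmod N (P + Q) (P' + Q').
Proof. by move=> PP' QQ' m ltmN; rewrite !coefD PP' ?QQ'. Qed.

(* The coefficient m of a product only involves coefficients up to m. *)
Lemma eqmod_mul N P P' Q Q' :
  eqmod N P P' -> eqmod N Q Q' -> eqmod N (P * Q) (P' * Q').
Proof.
move=> PP' QQ' m ltmN; rewrite !coefM; apply: eq_bigr => i _.
by rewrite PP' ?QQ' //; apply: leq_ltn_trans ltmN; rewrite ?leq_subr // -ltnS.
Qed.

Lemma eqmod_exp N P Q k : eqmod N P Q -> eqmod N (P ^+ k) (Q ^+ k).
Proof.
by move=> PQ; elim: k => [|k IHk] //; rewrite !exprS; apply: eqmod_mul.
Qed.

Lemma eqmod_mulX N P Q : eqmod N.+1 ('X * P) ('X * Q) -> eqmod N P Q.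
Proof. by move=> XPQ m ltmN; have := XPQ m.+1 ltmN; rewrite !coefXM. Qed.

Lemma coef_exp_small F : F`_0 = 0 -> forall i j, (j < i)%N -> (F ^+ i)`_j = 0.
Proof.
move=> F0; elim=> [|i IHi] j //= ltji.
rewrite exprS coefM; apply: big1 => l _.
case: (nat_of_ord l) (ltn_ord l) => [|l'] ltlj; first by rewrite F0 mul0r.
by rewrite IHi ?mulr0 //; lia.
Qed.

Lemma sum_ord_extend (h : nat -> R) n1 n2 : (n1 <= n2)%N ->
  (forall i, (n1 <= i)%N -> h i = 0) -> \sum_(i < n1) h i = \sum_(i < n2) h i.
Proof.
move=> len12 h0; rewrite (big_ord_widen n2 h len12) big_mkcond.
by apply: eq_bigr => i _; case: ltnP => // /h0 ->.
Qed.

(* Since F(0) = 0, the coefficient j of Q(F) only involves Q_0, ..., Q_j,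
   so it may be computed from any n > j terms of Q. *)
Lemma coef_comp_poly_trunc Q F n j : F`_0 = 0 -> (j < n)%N ->
  (Q \Po F)`_j = \sum_(i < n) Q`_i * (F ^+ i)`_j.
Proof.
move=> F0 ltjn; rewrite coef_comp_poly.
pose h i := Q`_i * (F ^+ i)`_j.
rewrite (@sum_ord_extend h _ (size Q + n)) ?leq_addr //;
  last by move=> i leQi; rewrite /h nth_default ?mul0r.
rewrite [RHS](@sum_ord_extend h _ (size Q + n)) ?leq_addl //.
by move=> i leni; rewrite /h coef_exp_small ?mulr0 // (leq_trans ltjn).
Qed.

Lemma eqmod_comp N F P P' :
  F`_0 = 0 -> eqmod N P P' -> eqmod N (P \Po F) (P' \Po F).
Proof.
move=> F0 PP' m ltmN; rewrite !(coef_comp_poly_trunc _ F0 ltmN).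
by apply: eq_bigr => i _; rewrite PP'.
Qed.

(* Fundamental theorem of Riordan arrays: the Riordan matrix (G, F), whose
   column i is G F^i, maps the column vector of Q to G Q(F). *)
Lemma riordan_mulE G F Q m : F`_0 = 0 ->
  \sum_(i < m.+1) (G * F ^+ i)`_m * Q`_i = (G * (Q \Po F))`_m.
Proof.
move=> F0.
have QF : eqmod m.+1 (Q \Po F) (\sum_(i < m.+1) Q`_i *: F ^+ i).
  move=> j ltjm; rewrite (coef_comp_poly_trunc _ F0 ltjm) coef_sum.
  by apply: eq_bigr => i _; rewrite coefZ.
rewrite (eqmod_mul (fun _ _ => erefl) QF (ltnSn m)) mulr_sumr coef_sum.
by apply: eq_bigr => i _; rewrite -scalerAr coefZ mulrC.
Qed.

End CongruenceModXn.

Lemma poly_split_const (R : nzRingType) (A : {poly R}) :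
  A = (A`_0)%:P + drop_poly 1 A * 'X.
Proof.
apply/polyP => i; rewrite coefD coefC coefMX coef_drop_poly.
by case: i => [|i]; rewrite ?addr0 ?add0r ?addn1.
Qed.

Section InvolutionModXn.
Variables (R : comNzRingType) (N : nat) (G F A : {poly R}).
Hypothesis F0 : F`_0 = 0.
Hypothesis GGF : eqmod N.+1 (G * (G \Po F)) 1.
Hypothesis FF : eqmod N.+1 (F \Po F) 'X.
Hypothesis AF : eqmod N.+1 (A * F) ('X * G).

Lemma riordan_involution_column k :
  eqmod N.+1 (G * ((G * F ^+ k) \Po F)) ('X ^+ k).
Proof.
rewrite comp_polyM rmorphXn mulrA -['X ^+ k]mul1r.
exact: eqmod_mul GGF (eqmod_exp k FF).
Qed.

(* a a(f) = 1: from x a a(f) = a (a f)(f) = a f g(f) = x g g(f) = x. *)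
Lemma almost_series_inverse : eqmod N (A * (A \Po F)) 1.
Proof.
apply: eqmod_mulX.
have -> : 'X * (A * (A \Po F)) = A * (A \Po F) * 'X by ring.
apply: eqmod_trans (_ : eqmod _ _ (A * (A \Po F) * (F \Po F))) _.
  exact: eqmod_mul (fun _ _ => erefl) (eqmod_sym FF).
rewrite -mulrA -comp_polyM.
apply: eqmod_trans (_ : eqmod _ _ (A * ('X * G \Po F))) _.
  exact: eqmod_mul (fun _ _ => erefl) (eqmod_comp F0 AF).
rewrite comp_polyM comp_polyX mulrA.
apply: eqmod_trans (_ : eqmod _ _ ('X * G * (G \Po F))) _.
  exact: eqmod_mul AF (fun _ _ => erefl).
by rewrite -mulrA; apply: eqmod_mul.
Qed.

(* Column 0 of the square of (a; g, f): a_0 a + x g a~(f) = a a(f) = 1. *)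
Lemma almost_riordan_first_column :
  eqmod N (A`_0 *: A + 'X * (G * (drop_poly 1 A \Po F))) 1.
Proof.
apply: eqmod_trans almost_series_inverse; apply: eqmod_sym.
apply: (eqmod_le (leqnSn N)).
rewrite {2}[A]poly_split_const comp_polyD comp_polyC comp_polyM comp_polyX.
have -> : A * ((A`_0)%:P + (drop_poly 1 A \Po F) * F) =
          A`_0 *: A + A * F * (drop_poly 1 A \Po F).
  by rewrite -mul_polyC; ring.
apply: eqmod_add (fun _ _ => erefl) _; rewrite mulrA.
exact: eqmod_mul AF (fun _ _ => erefl).
Qed.

End InvolutionModXn.

Definition trunc (N : nat) (p : fps) : {poly int} := \poly_(i < N) p i.

Definition agree (N : nat) (P : {poly int}) (p : fps) :=
  forall i, (i < N)%N -> P`_i = p i.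

Lemma agree_trunc N (p : fps) : agree N (trunc N p) p.
Proof. by move=> i ltiN; rewrite coef_poly ltiN. Qed.

Lemma agree_le M N (P : {poly int}) (p : fps) :
  (M <= N)%N -> agree N P p -> agree M P p.
Proof. by move=> leMN Pp i ltiM; rewrite Pp // (leq_trans ltiM leMN). Qed.

Lemma agree_ext N (P : {poly int}) (p q : fps) :
  agree N P p -> (forall i, q i = p i) -> agree N P q.
Proof. by move=> Pp qp i ltiN; rewrite qp Pp. Qed.

Lemma eqmod_agree N (P Q : {poly int}) (p : fps) :
  agree N P p -> agree N Q p -> eqmod N P Q.
Proof. by move=> Pp Qp m ltmN; rewrite Pp ?Qp. Qed.

Lemma agree_fone N : agree N 1 fone.
Proof. by move=> i _; rewrite coef1 /fone; case: (i == 0%N). Qed.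

Lemma agree_fX N : agree N 'X fX.
Proof. by move=> i _; rewrite coefX /fX; case: (i == 1%N). Qed.

Lemma agree_fmul N (P Q : {poly int}) (p q : fps) :
  agree N P p -> agree N Q q -> agree N (P * Q) (fmul p q).
Proof.
move=> Pp Qq m ltmN; rewrite coefM /fmul; apply: eq_bigr => i _.
by rewrite Pp ?Qq //; apply: leq_ltn_trans ltmN; rewrite ?leq_subr // -ltnS.
Qed.

Lemma agree_fpow N (F : {poly int}) (f : fps) k :
  agree N F f -> agree N (F ^+ k) (fpow f k).
Proof.
move=> Ff; elim: k => [|k IHk] /=; first exact: agree_fone.
by rewrite exprS; apply: agree_fmul.
Qed.

Lemma agree_fcomp N (P F : {poly int}) (p f : fps) :
  F`_0 = 0 -> agree N P p -> agree N F f -> agree N (P \Po F) (fcomp p f).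
Proof.
move=> F0 Pp Ff m ltmN; rewrite (coef_comp_poly_trunc _ F0 (ltnSn m)).
apply: eq_bigr => i _; have ltiN : (i < N)%N := leq_trans (ltn_ord i) ltmN.
by rewrite Pp // (agree_fpow i Ff).
Qed.

Lemma truncated_involution N (g f a : fps) :
  f 0%N = 0 ->
  (forall n, fmul g (fcomp g f) n = fone n) ->
  (forall n, fcomp f f n = fX n) ->
  (forall n, fmul a f n = fmul fX g n) ->
  let G := trunc N g in let F := trunc N f in let A := trunc N a in
  [/\ F`_0 = 0, eqmod N (G * (G \Po F)) 1, eqmod N (F \Po F) 'X
    & eqmod N (A * F) ('X * G)].
Proof.
move=> f0 ggf ff af G F A.
have F0 : F`_0 = 0 by rewrite coef_poly; case: N {G F A}.
have aG : agree N G g by exact: agree_trunc.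
have aF : agree N F f by exact: agree_trunc.
have aA : agree N A a by exact: agree_trunc.
split=> //.
- exact: eqmod_agree (agree_fmul aG (agree_fcomp F0 aG aF))
                      (agree_ext (@agree_fone N) ggf).
- exact: eqmod_agree (agree_fcomp F0 aF aF) (agree_ext (@agree_fX N) ff).
- exact: eqmod_agree (agree_fmul aA aF)
                      (agree_ext (agree_fmul (@agree_fX N) aG) af).
Qed.

(* Product rule for the almost Riordan array (a; g, f) acting on a column
   vector q (with Q a polynomial for the shifted vector q~):
   sum_j M_(n,j) q_j = [x^n] (q_0 a + x g q~(f)). *)
Lemma almost_riordan_mulE (a g f q : fps) (A G F Q : {poly int}) n :
  F`_0 = 0 -> agree n.+1 A a -> agree n G g -> agree n F f ->
  agree n Q (fun j => q j.+1) ->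
  \sum_(j < n.+1) almost_riordan a g f n j * q j
    = (q 0%N *: A + 'X * (G * (Q \Po F)))`_n.
Proof.
move=> F0 Aa Gg Ff Qq; rewrite big_ord_recl coefD coefZ Aa // mulrC.
congr (_ + _); case: n Aa Gg Ff Qq => [|m] Aa Gg Ff Qq.
  by rewrite big_ord0 coefXM.
rewrite coefXM /= -(riordan_mulE _ _ _ F0); apply: eq_bigr => i _.
by rewrite /almost_riordan /= (agree_fmul Gg (agree_fpow i Ff)) ?Qq.
Qed.

Unset Implicit Arguments.

Theorem mainTheorem10 (g f : fps) :
  g 0%N = 1 ->
  f 0%N = 0 ->
  (f 1%N = 1 \/ f 1%N = -1) ->
  (forall n, fmul g (fcomp g f) n = fone n) ->
  (forall n, fcomp f f n = fX n) ->
  forall a : fps, (forall n, fmul a f n = fmul fX g n) ->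
  imat_involution (almost_riordan a g f).
Proof.
move=> _ f0 _ ggf ff a af n k.
(* The entry (n, k) of M^2 only involves coefficients of order <= n + 1. *)
have [F0 GGF FF AF] := truncated_involution n.+2 f0 ggf ff af.
set G := trunc n.+2 g in GGF AF *; set F := trunc n.+2 f in F0 GGF FF AF *.
set A := trunc n.+2 a in AF *.
have Gg : agree n G g := agree_le (leqW (leqnSn n)) (agree_trunc g).
have Ff : agree n F f := agree_le (leqW (leqnSn n)) (agree_trunc f).
have Aa : agree n.+1 A a := agree_le (leqnSn n.+1) (agree_trunc a).
case: k => [|k]; rewrite /imatmul.
- have Da : agree n (drop_poly 1 A) (fun j => a j.+1).
    by move=> j ltjn; rewrite coef_drop_poly addn1 Aa.
  rewrite (almost_riordan_mulE F0 Aa Gg Ff Da) -[a 0%N]Aa //.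
  rewrite (almost_riordan_first_column F0 GGF FF AF) // coef1 /imat1.
  by case: (n == 0%N).
- have Qq : agree n (G * F ^+ k) (fun j => almost_riordan a g f j.+1 k.+1).
    exact: agree_fmul Gg (agree_fpow k Ff).
  rewrite (almost_riordan_mulE (q := almost_riordan a g f ^~ k.+1) F0 Aa Gg Ff Qq).
  rewrite scale0r add0r coefXM /imat1.
  case: ifP => [/eqP-> // | /negbT n_gt0].
  rewrite (riordan_involution_column GGF FF) ?coefXn; last by lia.
  by rewrite -eqSS prednK ?lt0n //; case: (n == k.+1).
Qed.
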